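(* For every $g\ge n$, $T_p(K^n_g)\subseteq p^n L_g$.
   Context: Let $K$ be an imaginary quadratic field of class number one with ring of integers $O$, $p$ an odd rational prime inert in $K$, $O_p$ the completion of $O$ at $p$. Let $N$ be a nonzero ideal of $O$, $\Gamma=\Gamma_1(Np)\subset SL_2(O)$. For $g\ge0$ let $S_g$ be the homogeneous polynomials of degree $g$ in $O_p[x,y]$ with $\gamma=\begin{pmatrix}a&b\\c&d\end{pmatrix}$ acting by $f(x,y)\mapsto f(ax+cy,bx+dy)$; $S_{g,g}=S_g\otimes S_g$ with $\gamma$ acting on the second factor via the complex conjugate $\bar\gamma$. Fix $n\ge1$; let $M^n_g\subseteq S_g$ be the degree-$g$ component of the ideal $(p,x)^n\subseteq O_p[x,y]$ (it is $\Gamma$-stable), and $W^n_{g,g}=M^n_g\otimes S_g+S_g\otimes M^n_g\subseteq S_{g,g}$. Let $L_g=H^1(\Gamma,S_{g,g})^{TF}$ and let $K^n_g\subseteq L_g$ be the image of $H^1(\Gamma,W^n_{g,g})^{TF}$, where $(\cdot)^{TF}$ denotes the maximal torsion-free quotient. The Hecke operator $T_p$ acts on $H^1(\Gamma,S_{g,g})$ as follows: with $\alpha_u=\begin{pmatrix}p&u\\0&1\end{pmatrix}$, $u$ running over representatives of $O/pO$, a cocycle $\phi$ is sent to $\delta\mapsto\sum_u\alpha_u\,\phi(\alpha_u^{-1}\delta\alpha_{v_u})$, where $v_u$ is the unique $v$ with $\alpha_u^{-1}\delta\alpha_v\in\Gamma$. *)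

From HB Require Import structures.
From mathcomp Require Import all_boot all_order all_algebra all_field.
From mathcomp Require Import mpoly.
From Stdlib Require Import ClassicalEpsilon.
Set Implicit Arguments. Unset Strict Implicit. Unset Printing Implicit Defensive.
Import Order.TTheory GRing.Theory Num.Theory.
Local Open Scope ring_scope.

Definition inK (d : nat) (x : algC) : Prop :=
  exists a b : rat, x = ratr a + ratr b * sqrtC (- (d%:R)).

Definition inO (d : nat) (x : algC) : Prop := inK d x /\ x \in Aint.

Definition dvdO (d : nat) (a x : algC) : Prop := exists b, inO d b /\ x = a * b.

Definition idealO (d : nat) (I : algC -> Prop) : Prop :=
  [/\ forall x, I x -> inO d x, I 0,
      forall x y, I x -> I y -> I (x + y) &
      forall a x, inO d a -> I x -> I (a * x)].

Definition class_number_one (d : nat) : Prop :=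
  forall I, idealO d I -> exists a, inO d a /\ forall x, I x <-> dvdO d a x.

(* the rational prime p is inert in K: pO is a prime ideal of O *)
Definition inert (d p : nat) : Prop :=
  ~ dvdO d (p%:R) 1 /\
  forall x y, inO d x -> inO d y -> dvdO d (p%:R) (x * y) ->
    dvdO d (p%:R) x \/ dvdO d (p%:R) y.

Definition idealNp (N : algC -> Prop) (p : nat) (x : algC) : Prop :=
  exists y, N y /\ x = p%:R * y.

Definition is_reps (d p : nat) (reps : seq algC) : Prop :=
  [/\ uniq reps, forall u, u \in reps -> inO d u,
      forall u v, u \in reps -> v \in reps -> dvdO d (p%:R) (u - v) -> u = v &
      forall x, inO d x -> exists2 u, u \in reps & dvdO d (p%:R) (x - u)].

(* (R, iota) is the completion O_p of O at p: iota is a ring morphism  *)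
(* on O, inducing isomorphisms O/p^k O ~= R/p^k R for all k, and R is   *)
(* p-adically separated and complete.                                   *)
Definition pdiv (R : comNzRingType) (p k : nat) (x : R) : Prop :=
  exists y : R, x = (p%:R) ^+ k * y.

Definition is_completion (d p : nat) (R : comNzRingType) (iota : algC -> R) : Prop :=
  [/\ iota 1 = 1,
      forall x y, inO d x -> inO d y -> iota (x + y) = iota x + iota y,
      forall x y, inO d x -> inO d y -> iota (x * y) = iota x * iota y,
      forall k (x : R), exists a, inO d a /\ pdiv p k (x - iota a) &
      forall k a, inO d a -> pdiv p k (iota a) -> dvdO d ((p ^ k)%:R) a] /\
  (forall x : R, (forall k, pdiv p k x) -> x = 0) /\
  (forall s : nat -> R, (forall k, pdiv p k (s k.+1 - s k)) ->
        exists l, forall k, pdiv p k (l - s k)).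

Definition inGamma (d : nat) (N : algC -> Prop) (p : nat) (g : 'M[algC]_2) : Prop :=
  [/\ forall i j, inO d (g i j), \det g = 1,
      idealNp N p (g 1 0), idealNp N p (g 0 0 - 1) & idealNp N p (g 1 1 - 1)].

Definition mx2 (a b c e : algC) : 'M[algC]_2 :=
  \matrix_(i < 2, j < 2)
    if val i == 0%N then (if val j == 0%N then a else b)
    else (if val j == 0%N then c else e).

Definition alpha (p : nat) (u : algC) : 'M[algC]_2 := mx2 (p%:R) u 0 1.

(* Polynomial modules.  S_g = homogeneous degree-g polynomials in      *)
(* R[x,y] (x = 'X_0, y = 'X_1).  S_{g,g} = S_g (x) S_g is realised as  *)
(* the span in R[x,y,x',y'] of f(x,y) h(x',y').                        *)
Definition inS (R : comNzRingType) (g : nat) (f : {mpoly R[2]}) : Prop :=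
  f \is g.-homog.

(* M^n_g = degree-g component of the ideal (p,x)^n of R[x,y]; the ideal *)
(* (p,x)^n is generated by the p^(n-i) x^i, 0 <= i <= n.               *)
Definition inM (R : comNzRingType) (p n g : nat) (f : {mpoly R[2]}) : Prop :=
  inS g f /\
  exists h : 'I_n.+1 -> {mpoly R[2]},
    f = \sum_(i < n.+1) ((p%:R : R) ^+ (n - i)) *: ('X_0 ^+ i * h i).

Definition tens (R : comNzRingType) (f h : {mpoly R[2]}) : {mpoly R[4]} :=
  (f \mPo [tuple 'X_0; 'X_1]) * (h \mPo [tuple 'X_2; 'X_3]).

Definition inSgg (R : comNzRingType) (g : nat) (F : {mpoly R[4]}) : Prop :=
  exists s : seq ({mpoly R[2]} * {mpoly R[2]}),
    (forall q, q \in s -> inS g q.1 /\ inS g q.2) /\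
    F = \sum_(q <- s) tens q.1 q.2.

Definition inW (R : comNzRingType) (p n g : nat) (F : {mpoly R[4]}) : Prop :=
  exists s t : seq ({mpoly R[2]} * {mpoly R[2]}),
    (forall q, q \in s -> inM p n g q.1 /\ inS g q.2) /\
    (forall q, q \in t -> inS g q.1 /\ inM p n g q.2) /\
    F = \sum_(q <- s) tens q.1 q.2 + \sum_(q <- t) tens q.1 q.2.

Definition act (R : comNzRingType) (iota : algC -> R) (gm : 'M[algC]_2)
    (F : {mpoly R[4]}) : {mpoly R[4]} :=
  F \mPo [tuple iota (gm 0 0) *: 'X_0 + iota (gm 1 0) *: 'X_1;
                iota (gm 0 1) *: 'X_0 + iota (gm 1 1) *: 'X_1;
                iota ((gm 0 0)^*) *: 'X_2 + iota ((gm 1 0)^*) *: 'X_3;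
                iota ((gm 0 1)^*) *: 'X_2 + iota ((gm 1 1)^*) *: 'X_3].

Definition cocycle (R : comNzRingType) (G : 'M[algC]_2 -> Prop)
    (Msub : {mpoly R[4]} -> Prop)
    (actf : 'M[algC]_2 -> {mpoly R[4]} -> {mpoly R[4]})
    (phi : 'M[algC]_2 -> {mpoly R[4]}) : Prop :=
  (forall gm, G gm -> Msub (phi gm)) /\
  (forall gm dl, G gm -> G dl -> phi (gm *m dl) = phi gm + actf gm (phi dl)).

(* Hecke operator T_p on cocycles:
   (T_p phi)(delta) = sum_u alpha_u . phi(alpha_u^-1 delta alpha_{v_u}),
   v_u the unique v in reps with alpha_u^-1 delta alpha_v in Gamma
   (realised as the sum over v of the terms for which this holds). *)
Definition Tp (R : comNzRingType) (iota : algC -> R) (G : 'M[algC]_2 -> Prop)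
    (p : nat) (reps : seq algC) (phi : 'M[algC]_2 -> {mpoly R[4]})
    (dl : 'M[algC]_2) : {mpoly R[4]} :=
  \sum_(u <- reps) \sum_(v <- reps)
    (let m := (alpha p u)^-1 *m dl *m alpha p v in
     if excluded_middle_informative (G m)
     then act iota (alpha p u) (phi m) else 0).

(* Each [alpha_u = [[p, u], [0, 1]]] acts on the first variable by [x |-> p x], so it maps
   [M^n_g] into [p^n S_g] and hence [W^n_{g,g}] into [p^n S_{g,g}]: the cochain [T_p phi] is
   [p^n psi] pointwise.  [T_p phi] is again a cocycle, because for [delta] in Gamma the map
   [u |-> v_u] permutes the residues mod [p] and the matrices [alpha_u^-1 delta alpha_(v_u)]
   compose along products.  As [O_p] has no [p]-torsion, [psi] is a cocycle as well, and
   [T_p phi - p^n psi = 0] is the coboundary of [0]. *)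

From HB Require Import structures.
From mathcomp Require Import all_boot all_order all_algebra all_field.
From mathcomp Require Import mpoly ring.
From Stdlib Require Import ClassicalEpsilon.
Import Order.TTheory GRing.Theory Num.Theory.
Local Open Scope ring_scope.

Set Implicit Arguments. Unset Strict Implicit. Unset Printing Implicit Defensive.

Lemma conjC_sqrtC_lt0 (x : algC) : x < 0 -> (sqrtC x)^* = - sqrtC x.
Proof.
move=> x_lt0; set s := sqrtC x.
have s2 : s ^+ 2 = x by rewrite sqrtCK.
have x_real : x^* = x by apply: conj_Creal; rewrite (ler_real (ltW x_lt0)) real0.
have : (s^* - s) * (s^* + s) = 0.
  by rewrite mulrDr !mulrBl [s * s^*]mulrC -!expr2 -rmorphXn /= s2 x_real; ring.
move/eqP; rewrite mulf_eq0 subr_eq0 addr_eq0 => /orP[/eqP/CrealP s_real|/eqP //].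
by move: x_lt0; rewrite -s2 real_exprn_even_lt0 ?ltxx.
Qed.

Section RingOfIntegers.
Variable d : nat.
Hypothesis d_gt0 : (0 < d)%N.
Local Notation s := (sqrtC (- (d%:R : algC))).

Lemma inK_add x y : inK d x -> inK d y -> inK d (x + y).
Proof.
move=> [a [b ->]] [a' [b' ->]]; exists (a + a'), (b + b').
by rewrite !rmorphD /=; ring.
Qed.

Lemma inK_opp x : inK d x -> inK d (- x).
Proof. by move=> [a [b ->]]; exists (- a), (- b); rewrite !rmorphN /=; ring. Qed.

Lemma inK_mul x y : inK d x -> inK d y -> inK d (x * y).
Proof.
move=> [a [b ->]] [a' [b' ->]].
exists (a * a' - d%:R * b * b'), (a * b' + b * a').
have s2 : s * s = - d%:R by rewrite -expr2 sqrtCK.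
by rewrite !(rmorphD, rmorphB, rmorphM) /= ?rmorph_nat; ring: s2.
Qed.

Lemma inK_conj x : inK d x -> inK d x^*.
Proof.
have s_conj : s^* = - s by rewrite conjC_sqrtC_lt0 // oppr_lt0 ltr0n.
move=> [a [b ->]]; exists a, (- b).
by rewrite rmorphD (rmorphM _ (ratr b)) /= s_conj !(conj_Crat (Crat_rat _)) rmorphN; ring.
Qed.

Lemma inO_add x y : inO d x -> inO d y -> inO d (x + y).
Proof. by move=> [Kx Ax] [Ky Ay]; split; [exact: inK_add | exact: rpredD]. Qed.

Lemma inO_opp x : inO d x -> inO d (- x).
Proof. by move=> [Kx Ax]; split; [exact: inK_opp | rewrite rpredN]. Qed.

Lemma inO_sub x y : inO d x -> inO d y -> inO d (x - y).
Proof. by move=> Ox Oy; exact: inO_add Ox (inO_opp Oy). Qed.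

Lemma inO_mul x y : inO d x -> inO d y -> inO d (x * y).
Proof. by move=> [Kx Ax] [Ky Ay]; split; [exact: inK_mul | exact: rpredM]. Qed.

Lemma inO_conj x : inO d x -> inO d x^*.
Proof. by move=> [Kx Ax]; split; [exact: inK_conj | rewrite (Aint_aut Num.conj)]. Qed.

End RingOfIntegers.

Lemma inO_nat d n : inO d n%:R.
Proof. by split; [exists n%:R, 0; rewrite rmorph_nat rmorph0 mul0r addr0 | exact: rpred_nat]. Qed.

Lemma inO0 d : inO d 0. Proof. exact: inO_nat 0. Qed.
Lemma inO1 d : inO d 1. Proof. exact: inO_nat 1. Qed.

#[global] Hint Resolve inO_nat inO0 inO1 : core.

Section Completion.
Variables (d p : nat) (R : comNzRingType) (iota : algC -> R).
Hypothesis iota_completion : is_completion d p iota.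

Lemma iota1 : iota 1 = 1.
Proof. by case: iota_completion => -[]. Qed.

Lemma iotaD x y : inO d x -> inO d y -> iota (x + y) = iota x + iota y.
Proof. by case: iota_completion => -[_ + _ _ _] _; apply. Qed.

Lemma iotaM x y : inO d x -> inO d y -> iota (x * y) = iota x * iota y.
Proof. by case: iota_completion => -[_ _ + _ _] _; apply. Qed.

Lemma iota0 : iota 0 = 0.
Proof. by apply: (addrI (iota 0)); rewrite -iotaD // !addr0. Qed.

Lemma iota_nat k : iota k%:R = k%:R.
Proof. by elim: k => [|k IHk]; rewrite ?iota0 // -addn1 !natrD iotaD ?IHk ?iota1. Qed.

Hypothesis p_gt0 : (0 < p)%N.

(* If [p t = 0] then [t] is divisible by every power of [p]: approximate [t] by
   [iota a] modulo [p^k]; then [iota (p a)] is divisible by [p^(k+1)], hence so is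
   [p a] in O. *)
Lemma pnat_lreg : GRing.lreg (p%:R : R).
Proof.
apply: mulrI0_lreg => t pt0.
case: iota_completion => -[_ _ _ approx lift] [separated _]; apply: separated => k.
have [a [Oa [y t_approx]]] := approx k t.
have iota_pa : iota (p%:R * a) = p%:R ^+ k.+1 * - y.
  by rewrite iotaM // iota_nat -[iota a](subKr t) t_approx mulrDr mulrN pt0 exprS; ring.
have [b [Ob pa_eq]] := lift k.+1 _ (inO_mul (inO_nat d p) Oa) (ex_intro _ _ iota_pa).
have p_neq0 : (p%:R : algC) != 0 by rewrite pnatr_eq0 -lt0n.
have a_eq : a = (p ^ k)%:R * b.
  by apply: (mulfI p_neq0); rewrite pa_eq !natrX exprS mulrA.
exists (iota b + y).
by rewrite mulrDr -t_approx a_eq iotaM // iota_nat natrX; ring.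
Qed.

End Completion.

Lemma lreg_mpolyZ_eq0 (R : comNzRingType) k (c : R) (F : {mpoly R[k]}) :
  GRing.lreg c -> (c *: F == 0) = (F == 0).
Proof.
move=> c_lreg; apply/eqP/eqP => [cF0|->]; last by rewrite scaler0.
apply/mpolyP => m; apply: c_lreg.
by rewrite -mcoeffZ cF0 mcoeff0 mulr0.
Qed.

Section Substitution.
Variable R : comNzRingType.

Lemma comp_mpolyA n k l (f : {mpoly R[n]}) (s : n.-tuple {mpoly R[k]})
    (t : k.-tuple {mpoly R[l]}) :
  (f \mPo s) \mPo t = f \mPo [tuple tnth s i \mPo t | i < n].
Proof.
rewrite (comp_mpolyEX f s) raddf_sum (comp_mpolyEX f); apply: eq_bigr => m _.
rewrite /= comp_mpolyZ !comp_mpolyX rmorph_prod; congr (_ *: _).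
by apply: eq_bigr => i _; rewrite rmorphXn tnth_map tnth_ord_tuple.
Qed.

Lemma dhomog_comp_linear n k g (f : {mpoly R[n]}) (t : n.-tuple {mpoly R[k]}) :
  (forall i, tnth t i \is 1.-homog) -> f \is g.-homog -> f \mPo t \is g.-homog.
Proof.
move=> t_linear /dhomogP f_homog; rewrite comp_mpolyEX big_seq.
apply: (big_ind (fun q => q \is g.-homog)) => [||m m_supp].
- exact: dhomog0.
- exact: dhomogD.
have <- : (\sum_i m i)%N = g by rewrite -mdegE; exact: f_homog.
apply: dhomogZ; rewrite comp_mpolyX.
elim/big_rec2: _ => [|i e q _ q_homog]; first exact: dhomog1.
apply: dhomogM q_homog.
by rewrite -[X in X.-homog]mul1n; apply: dhomogMn.
Qed.

Definition subst2 (iota : algC -> R) (gm : 'M[algC]_2) : 2.-tuple {mpoly R[2]} :=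
  [tuple iota (gm 0 0) *: 'X_0 + iota (gm 1 0) *: 'X_1;
         iota (gm 0 1) *: 'X_0 + iota (gm 1 1) *: 'X_1].

Lemma inS_subst2 g iota gm (f : {mpoly R[2]}) : inS g f -> inS g (f \mPo subst2 iota gm).
Proof.
apply: dhomog_comp_linear => -[[|[|i]] lt_i2] //; rewrite (tnth_nth 0) /=;
  by apply: dhomogD; apply: dhomogZ; rewrite dhomogX /= mdeg1.
Qed.

Lemma act_tens iota gm (f h : {mpoly R[2]}) :
  act iota gm (tens f h) =
  tens (f \mPo subst2 iota gm) (h \mPo subst2 (fun x => iota x^*) gm).
Proof.
rewrite /act /tens rmorphM /= !comp_mpolyA; congr (_ * _); congr comp_mpoly;
  apply: eq_from_tnth => i; rewrite !tnth_map !tnth_ord_tuple;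
  case: i => -[|[|i]] lt_i2 //; rewrite !(tnth_nth 0) /=;
  by rewrite !comp_mpolyD !comp_mpolyZ !comp_mpolyXU.
Qed.

Lemma tensZl c (f h : {mpoly R[2]}) : tens (c *: f) h = c *: tens f h.
Proof. by rewrite /tens comp_mpolyZ scalerAl. Qed.

Lemma tensZr c (f h : {mpoly R[2]}) : tens f (c *: h) = c *: tens f h.
Proof. by rewrite /tens comp_mpolyZ scalerAr. Qed.

Variable iota : algC -> R.

Lemma act0 gm : act iota gm 0 = 0.
Proof. exact: raddf0. Qed.

Lemma actD gm : {morph act iota gm : F G / F + G}.
Proof. exact: raddfD. Qed.

Lemma actZ gm c F : act iota gm (c *: F) = c *: act iota gm F.
Proof. exact: comp_mpolyZ. Qed.

Lemma act_sum gm (I : Type) (r : seq I) (P : pred I) (F : I -> {mpoly R[4]}) :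
  act iota gm (\sum_(i <- r | P i) F i) = \sum_(i <- r | P i) act iota gm (F i).
Proof. exact: raddf_sum. Qed.

End Substitution.

Section TwoByTwo.

Lemma ord2P (i : 'I_2) : (i = 0) + (i = 1).
Proof. by case: i => -[|[|i]] lt_i2 //; [left | right]; apply: val_inj. Qed.

Lemma mx2E a b c e :
  (mx2 a b c e 0 0 = a) * (mx2 a b c e 0 1 = b) *
  (mx2 a b c e 1 0 = c) * (mx2 a b c e 1 1 = e).
Proof. by rewrite !mxE. Qed.

Lemma mx2_eta (A : 'M[algC]_2) : A = mx2 (A 0 0) (A 0 1) (A 1 0) (A 1 1).
Proof. by apply/matrixP => i j; rewrite mxE; case: (ord2P i) => ->; case: (ord2P j) => ->. Qed.

Lemma mulmx2E (A B : 'M[algC]_2) i j : (A *m B) i j = A i 0 * B 0 j + A i 1 * B 1 j.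
Proof.
rewrite mxE !big_ord_recl big_ord0 addr0.
by have -> : lift ord0 (ord0 : 'I_1) = 1 :> 'I_2 by apply: val_inj.
Qed.

Lemma mx2_mul a b c e a' b' c' e' :
  mx2 a b c e *m mx2 a' b' c' e' =
  mx2 (a * a' + b * c') (a * b' + b * e') (c * a' + e * c') (c * b' + e * e').
Proof.
by apply/matrixP => i j; rewrite mulmx2E !mxE; case: (ord2P i) => ->; case: (ord2P j) => ->.
Qed.

Lemma mx2_one : mx2 1 0 0 1 = 1.
Proof. by apply/matrixP => i j; rewrite !mxE; case: (ord2P i) => ->; case: (ord2P j) => ->. Qed.

Lemma det_mx2 a b c e : \det (mx2 a b c e) = a * e - b * c.
Proof.
rewrite (expand_det_row _ 0) !big_ord_recl big_ord0 addr0 /cofactor !det_mx11 !mxE /=.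
by rewrite expr0 expr1; ring.
Qed.

Variable p : nat.
Hypothesis p_neq0 : (p%:R : algC) != 0.

Lemma alpha_unitmx u : alpha p u \in unitmx.
Proof. by rewrite unitmxE det_mx2 mulr1 mulr0 subr0 unitfE. Qed.

Lemma alphaV u : (alpha p u)^-1 = mx2 p%:R^-1 (- u / p%:R) 0 1.
Proof.
apply: (mulrI (alpha_unitmx u)); rewrite mulrV ?alpha_unitmx // -mulmxE mx2_mul -mx2_one.
by congr mx2; field.
Qed.

Definition alpha_conj u v (dl : 'M[algC]_2) := (alpha p u)^-1 *m dl *m alpha p v.

Lemma alpha_conj_mx2 u v a b c e :
  alpha_conj u v (mx2 a b c e) =
  mx2 (a - u * c) (((a - u * c) * v + b - u * e) / p%:R) (c * p%:R) (c * v + e).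
Proof. by rewrite /alpha_conj alphaV !mx2_mul; congr mx2; field. Qed.

Lemma alpha_conj_mul u v w d1 d2 :
  alpha_conj u v d1 *m alpha_conj v w d2 = alpha_conj u w (d1 *m d2).
Proof. by rewrite /alpha_conj !mulmxE !mulrA (mulrK (alpha_unitmx v)). Qed.

Lemma alpha_mul_conj u v dl : alpha p u *m alpha_conj u v dl = dl *m alpha p v.
Proof. by rewrite /alpha_conj !mulmxE !mulrA (mulrV (alpha_unitmx u)) mul1r. Qed.

End TwoByTwo.

Lemma act_comp d p (R : comNzRingType) (iota : algC -> R) (g h : 'M[algC]_2) F :
  (0 < d)%N -> is_completion d p iota ->
  (forall i j, inO d (g i j)) -> (forall i j, inO d (h i j)) ->
  act iota g (act iota h F) = act iota (g *m h) F.
Proof.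
move=> d_gt0 iota_completion Og Oh.
have iota_mulmx i j :
    iota ((g *m h) i j) = iota (g i 0) * iota (h 0 j) + iota (g i 1) * iota (h 1 j).
  by rewrite mulmx2E (iotaD iota_completion) ?(iotaM iota_completion) //; apply: inO_mul.
have iota_conj_mulmx i j :
    iota ((g *m h) i j)^* = iota (g i 0)^* * iota (h 0 j)^* + iota (g i 1)^* * iota (h 1 j)^*.
  rewrite mulmx2E rmorphD !rmorphM /= (iotaD iota_completion) ?(iotaM iota_completion) //;
  by do ?[apply: inO_mul | apply: inO_conj].
rewrite /act comp_mpolyA; congr comp_mpoly; apply: eq_from_tnth => i.
rewrite tnth_map tnth_ord_tuple; case: i => -[|[|[|[|i]]]] lt_i4 //;
rewrite !(tnth_nth 0) /= !comp_mpolyD !comp_mpolyZ !comp_mpolyXU /=;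
by rewrite ?iota_mulmx ?iota_conj_mulmx -!mul_mpolyC !rmorphD !rmorphM /=; ring.
Qed.

Section Divisibility.
Variables (R : comNzRingType) (p n g : nat).

(* Substituting [p x] for [x] turns each generator [p^(n-i) x^i] of [(p, x)^n]
   into [p^n x^i]. *)
Lemma inM_subst2 (iota : algC -> R) (gm : 'M[algC]_2) (f : {mpoly R[2]}) :
  iota (gm 0 0) = p%:R -> iota (gm 1 0) = 0 -> inM p n g f ->
  exists2 A, inS g A & f \mPo subst2 iota gm = p%:R ^+ n *: A.
Proof.
move=> gm00 gm10 [f_homog [h f_eq]]; rewrite f_eq in f_homog *; set t := subst2 iota gm.
pose A := \sum_(i < n.+1) 'X_0 ^+ i * (h i \mPo t).
have fA : (\sum_(i < n.+1) p%:R ^+ (n - i) *: ('X_0 ^+ i * h i)) \mPo t = p%:R ^+ n *: A.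
  rewrite raddf_sum scaler_sumr; apply: eq_bigr => i _ /=.
  rewrite comp_mpolyZ rmorphM rmorphXn /= comp_mpolyXU /= gm00 gm10 scale0r addr0.
  by rewrite exprZn -scalerAl scalerA -exprD subnK // -ltnS.
exists (pihomog mdeg g A); first exact: pihomogP.
by rewrite -linearZ /= -fA pihomog_dE //; apply: inS_subst2.
Qed.

Lemma inSgg0 : inSgg (R := R) g 0.
Proof. by exists [::]; rewrite big_nil. Qed.

Lemma inSggD F G : inSgg (R := R) g F -> inSgg g G -> inSgg g (F + G).
Proof.
move=> [s [s_S ->]] [t [t_S ->]]; exists (s ++ t); rewrite big_cat; split => // q.
by rewrite mem_cat => /orP[/s_S | /t_S].
Qed.

Lemma inSgg_tens (f h : {mpoly R[2]}) : inS g f -> inS g h -> inSgg g (tens f h).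
Proof. by exists [:: (f, h)]; rewrite big_seq1; split => // q; rewrite inE => /eqP ->. Qed.

Definition inSgg_scaled (k : R) (F : {mpoly R[4]}) := exists Y, inSgg g Y /\ F = k *: Y.

Lemma inSgg_scaled0 k : inSgg_scaled k 0.
Proof. by exists 0; rewrite scaler0; split=> //; apply: inSgg0. Qed.

Lemma inSgg_scaled_sum k (I : eqType) (r : seq I) (P : pred I) (F : I -> {mpoly R[4]}) :
  (forall i, i \in r -> P i -> inSgg_scaled k (F i)) ->
  inSgg_scaled k (\sum_(i <- r | P i) F i).
Proof.
move=> F_scaled; rewrite big_seq_cond; apply: big_ind => [||i /andP[]].
- exact: inSgg_scaled0.
- move=> _ _ [Y [SY ->]] [Z [SZ ->]]; exists (Y + Z).
  by rewrite scalerDr; split=> //; apply: inSggD.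
exact: F_scaled.
Qed.

Lemma act_alpha_inW (iota : algC -> R) u F :
  iota p%:R = p%:R -> iota 0 = 0 -> inW p n g F ->
  inSgg_scaled (p%:R ^+ n) (act iota (alpha p u) F).
Proof.
move=> iota_p iota_zero [s [t [s_W [t_W ->]]]].
have iota_alpha00 : iota (alpha p u 0 0) = p%:R by rewrite /alpha !mx2E iota_p.
have iota_alpha10 : iota (alpha p u 1 0) = 0 by rewrite /alpha !mx2E iota_zero.
have conj_alpha00 : iota (alpha p u 0 0)^* = p%:R by rewrite /alpha !mx2E conjC_nat iota_p.
have conj_alpha10 : iota (alpha p u 1 0)^* = 0 by rewrite /alpha !mx2E conjC0 iota_zero.
rewrite actD !act_sum; set k := p%:R ^+ n.
have [Y [SY ->]] : inSgg_scaled k (\sum_(q <- s) act iota (alpha p u) (tens q.1 q.2)).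
  apply: inSgg_scaled_sum => q /s_W[q1_M q2_S] _; rewrite act_tens.
  have [A SA ->] := inM_subst2 iota_alpha00 iota_alpha10 q1_M.
  by rewrite tensZl; eexists; split; last reflexivity; apply: inSgg_tens SA (inS_subst2 _ _ q2_S).
have [Z [SZ ->]] : inSgg_scaled k (\sum_(q <- t) act iota (alpha p u) (tens q.1 q.2)).
  apply: inSgg_scaled_sum => q /t_W[q1_S q2_M] _; rewrite act_tens.
  have [A SA ->] := inM_subst2 (iota := fun x => iota x^*) conj_alpha00 conj_alpha10 q2_M.
  by rewrite tensZr; eexists; split; last reflexivity; apply: inSgg_tens (inS_subst2 _ _ q1_S) SA.
by exists (Y + Z); rewrite scalerDr; split=> //; apply: inSggD.
Qed.

Lemma Tp_inSgg_scaled (iota : algC -> R) (G : 'M[algC]_2 -> Prop) reps phi dl :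
  iota p%:R = p%:R -> iota 0 = 0 -> (forall gm, G gm -> inW p n g (phi gm)) ->
  inSgg_scaled (p%:R ^+ n) (Tp iota G p reps phi dl).
Proof.
move=> iota_p iota_zero phi_W.
apply: inSgg_scaled_sum => u _ _; apply: inSgg_scaled_sum => v _ _ /=.
case: excluded_middle_informative => Gm; last exact: inSgg_scaled0.
exact: act_alpha_inW iota_p iota_zero (phi_W _ Gm).
Qed.

End Divisibility.

Section Ideals.
Variables (d : nat) (I : algC -> Prop).
Hypothesis I_ideal : idealO d I.

Lemma idealO_inO x : I x -> inO d x.
Proof. by case: I_ideal => + _ _ _; apply. Qed.

Lemma idealOD x y : I x -> I y -> I (x + y).
Proof. by case: I_ideal => _ _ + _; apply. Qed.

Lemma idealOM a x : inO d a -> I x -> I (a * x).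
Proof. by case: I_ideal => _ _ _; apply. Qed.

Lemma idealOB x y : I x -> I y -> I (x - y).
Proof.
by move=> Ix Iy; rewrite -mulN1r; apply: idealOD Ix (idealOM (inO_opp (inO1 d)) Iy).
Qed.

Lemma idealO_idealNp p : idealO d (idealNp I p).
Proof.
split.
- by move=> _ [y [Iy ->]]; apply/inO_mul/idealO_inO.
- by exists 0; split; [case: I_ideal | rewrite mulr0].
- move=> _ _ [x [Ix ->]] [y [Iy ->]]; exists (x + y).
  by rewrite mulrDr; split => //; apply: idealOD.
- by move=> a _ Oa [x [Ix ->]]; exists (a * x); rewrite mulrCA; split => //; apply: idealOM.
Qed.

End Ideals.

Section CongruenceSubgroup.
Variables (d p : nat) (N : algC -> Prop).
Hypotheses (N_ideal : idealO d N) (p_prime : prime p) (p_inert : inert d p).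
Local Notation Np := (idealNp N p).
Local Notation Gamma := (inGamma d N p).

Let Np_ideal : idealO d Np := idealO_idealNp N_ideal p.
Let NpD := idealOD Np_ideal.
Let NpM := idealOM Np_ideal.
Let NpB := idealOB Np_ideal.
Let p_neq0 : (p%:R : algC) != 0. Proof. by rewrite pnatr_eq0 -lt0n prime_gt0. Qed.

Lemma inGamma_mx2 a b c e :
  Gamma (mx2 a b c e) <->
  [/\ inO d a, inO d b, inO d c & inO d e] /\
  [/\ a * e - b * c = 1, Np c, Np (a - 1) & Np (e - 1)].
Proof.
rewrite /inGamma det_mx2 !mx2E.
split=> [[O_entries det1 Nc Na Ne] | [[Oa Ob Oc Oe] [det1 Nc Na Ne]]].
  move: (O_entries 0 0) (O_entries 0 1) (O_entries 1 0) (O_entries 1 1).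
  by rewrite !mx2E.
by split => // i j; rewrite mxE; case: (ord2P i) => ->; case: (ord2P j) => ->.
Qed.

Lemma inGamma_inO g : Gamma g -> forall i j, inO d (g i j).
Proof. by case. Qed.

Lemma inGamma_mul g h : Gamma g -> Gamma h -> Gamma (g *m h).
Proof.
move=> [Og g_det Ng10 Ng00 Ng11] [Oh h_det Nh10 Nh00 Nh11].
have O_gh i j : inO d ((g *m h) i j).
  by rewrite mulmx2E; exact: inO_add (inO_mul (Og _ _) (Oh _ _)) (inO_mul (Og _ _) (Oh _ _)).
split => //; rewrite ?mulmx2E.
- by rewrite det_mulmx g_det h_det mulr1.
- by rewrite mulrC; exact: NpD (NpM (Oh 0 0) Ng10) (NpM (Og 1 1) Nh10).
- have -> : g 0 0 * h 0 0 + g 0 1 * h 1 0 - 1 = h 0 0 * (g 0 0 - 1) + (h 0 0 - 1) + g 0 1 * h 1 0.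
    by ring.
  exact: NpD (NpD (NpM (Oh 0 0) Ng00) Nh00) (NpM (Og 0 1) Nh10).
- have -> : g 1 0 * h 0 1 + g 1 1 * h 1 1 - 1 = h 0 1 * g 1 0 + h 1 1 * (g 1 1 - 1) + (h 1 1 - 1).
    by ring.
  exact: NpD (NpD (NpM (Oh 0 1) Ng10) (NpM (Oh 1 1) Ng11)) Nh11.
Qed.

Lemma Np_sub1_not_dvdO x : Np (x - 1) -> ~ dvdO d p%:R x.
Proof.
move=> [y [Ny x1]] [z [Oz xz]]; case: p_inert => p_nunit _; apply: p_nunit.
exists (z - y); split; first exact: inO_sub Oz (idealO_inO N_ideal Ny).
by rewrite mulrBr -xz -x1; ring.
Qed.

Variable reps : seq algC.
Hypothesis reps_residues : is_reps d p reps.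

Lemma reps_inO u : u \in reps -> inO d u.
Proof. by case: reps_residues => _ + _ _; apply. Qed.

Lemma reps_residue x : inO d x -> exists2 u, u \in reps & dvdO d p%:R (x - u).
Proof. by case: reps_residues => _ _ _; apply. Qed.

Lemma reps_dvdO_eq u v : u \in reps -> v \in reps -> dvdO d p%:R (u - v) -> u = v.
Proof. by case: reps_residues => _ _ + _; apply. Qed.

Lemma alpha_conj_inGamma_exists dl u :
  Gamma dl -> inO d u -> exists2 v, v \in reps & Gamma (alpha_conj p u v dl).
Proof.
rewrite [dl]mx2_eta; move: (dl 0 0) (dl 0 1) (dl 1 0) (dl 1 1) => a b c e.
move=> /inGamma_mx2[[Oa Ob Oc Oe] [det1 Nc Na Ne]] Ou.
have [v v_rep [w [Ow vw]]] : exists2 v, v \in reps & dvdO d p%:R (u * e - b - v).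
  exact: reps_residue (inO_sub (inO_mul Ou Oe) Ob).
have Ov := reps_inO v_rep.
have Na' : Np (a - u * c - 1) by rewrite addrAC; apply: NpB Na (NpM Ou Nc).
have [y [Ny ay]] := Na'.
have b_entry : ((a - u * c) * v + b - u * e) / p%:R = y * v - w.
  have -> : a - u * c = p%:R * y + 1 by rewrite -ay; ring.
  have -> : b = u * e - v - p%:R * w by rewrite -vw; ring.
  by field.
exists v => //; rewrite alpha_conj_mx2 // b_entry; apply/inGamma_mx2; split; split.
- exact: inO_sub Oa (inO_mul Ou Oc).
- exact: inO_sub (inO_mul (idealO_inO N_ideal Ny) Ov) Ow.
- exact: inO_mul.
- exact: inO_add (inO_mul Oc Ov) Oe.
- by rewrite -b_entry -[RHS]det1; field.
- by rewrite mulrC; apply: NpM.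
- exact: Na'.
- by rewrite -addrA mulrC; apply: NpD (NpM Ov Nc) Ne.
Qed.

Lemma alpha_conj_inGamma_uniq dl u v v' : v \in reps -> v' \in reps ->
  Gamma (alpha_conj p u v dl) -> Gamma (alpha_conj p u v' dl) -> v = v'.
Proof.
rewrite [dl]mx2_eta; move: (dl 0 0) (dl 0 1) (dl 1 0) (dl 1 1) => a b c e v_rep v'_rep.
rewrite !alpha_conj_mx2 // => /inGamma_mx2[[Oa' Ob' _ _] [_ _ Na' _]] /inGamma_mx2[[_ Ob'' _ _] _].
have Ov := reps_inO v_rep; have Ov' := reps_inO v'_rep.
have : dvdO d p%:R ((a - u * c) * (v' - v)).
  by eexists; split; [exact: inO_sub Ob'' Ob' | field].
case: p_inert => _ /(_ _ _ Oa' (inO_sub Ov' Ov)) /[apply] -[/(Np_sub1_not_dvdO Na') // |].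
by move/reps_dvdO_eq => /(_ v'_rep v_rep).
Qed.

Lemma alpha_conj_inGamma_inj dl u u' v : u \in reps -> u' \in reps ->
  Gamma (alpha_conj p u v dl) -> Gamma (alpha_conj p u' v dl) -> u = u'.
Proof.
rewrite [dl]mx2_eta; move: (dl 0 0) (dl 0 1) (dl 1 0) (dl 1 1) => a b c e u_rep u'_rep.
rewrite !alpha_conj_mx2 // => /inGamma_mx2[[_ Ob' _ Oe'] [_ _ _ Ne']] /inGamma_mx2[[_ Ob'' _ _] _].
have Ou := reps_inO u_rep; have Ou' := reps_inO u'_rep.
have : dvdO d p%:R ((u' - u) * (c * v + e)).
  by eexists; split; [exact: inO_sub Ob' Ob'' | field].
case: p_inert => _ /(_ _ _ (inO_sub Ou' Ou) Oe') /[apply] -[| /(Np_sub1_not_dvdO Ne') //].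
by move/reps_dvdO_eq => /(_ u'_rep u_rep).
Qed.

End CongruenceSubgroup.

Lemma alpha_inO d p u : inO d u -> forall i j, inO d (alpha p u i j).
Proof.
move=> Ou i j; rewrite /alpha /mx2 mxE; case: (ord2P i) => ->; case: (ord2P j) => -> /=;
  [exact: inO_nat | exact: Ou | exact: inO0 | exact: inO1].
Qed.

Section HeckeOperator.
Variables (d p : nat) (R : comNzRingType) (iota : algC -> R).
Variables (N : algC -> Prop) (reps : seq algC).
Hypotheses (d_gt0 : (0 < d)%N) (iota_completion : is_completion d p iota).
Hypotheses (N_ideal : idealO d N) (p_prime : prime p) (p_inert : inert d p).
Hypothesis reps_residues : is_reps d p reps.
Local Notation Gamma := (inGamma d N p).

Let p_neq0 : (p%:R : algC) != 0. Proof. by rewrite pnatr_eq0 -lt0n prime_gt0. Qed.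
Let reps_O := reps_inO reps_residues.
Let conj_uniq := alpha_conj_inGamma_uniq N_ideal p_prime p_inert reps_residues.
Let conj_inj := alpha_conj_inGamma_inj N_ideal p_prime p_inert reps_residues.
Let Gamma_mul := inGamma_mul (p := p) N_ideal.

Definition vmap dl u := epsilon (inhabits 0) (fun v => v \in reps /\ Gamma (alpha_conj p u v dl)).

Lemma vmapP dl u : Gamma dl -> u \in reps ->
  vmap dl u \in reps /\ Gamma (alpha_conj p u (vmap dl u) dl).
Proof.
move=> Gdl u_rep; apply: (epsilon_spec _ (fun v => v \in reps /\ Gamma (alpha_conj p u v dl))).
have [v v_rep Gv] := alpha_conj_inGamma_exists N_ideal p_prime reps_residues Gdl (reps_O u_rep).
by exists v.
Qed.

Lemma vmap_mul d1 d2 u : Gamma d1 -> Gamma d2 -> u \in reps ->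
  vmap (d1 *m d2) u = vmap d2 (vmap d1 u).
Proof.
move=> G1 G2 u_rep; have [v1_rep Gv1] := vmapP G1 u_rep.
have [v2_rep Gv2] := vmapP G2 v1_rep; have [v12_rep Gv12] := vmapP (Gamma_mul G1 G2) u_rep.
apply: conj_uniq v12_rep v2_rep Gv12 _.
by rewrite -(alpha_conj_mul p_neq0 _ (vmap d1 u)); apply: Gamma_mul.
Qed.

Lemma perm_vmap dl : Gamma dl -> perm_eq (map (vmap dl) reps) reps.
Proof.
move=> Gdl; have reps_uniq : uniq reps by case: reps_residues.
have vmap_inj : {in reps &, injective (vmap dl)}.
  move=> u u' u_rep u'_rep vmap_eq; have [_ Gv] := vmapP Gdl u_rep.
  have [_ Gv'] := vmapP Gdl u'_rep; rewrite -vmap_eq in Gv'.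
  exact: conj_inj u_rep u'_rep Gv Gv'.
have vmap_reps : {subset map (vmap dl) reps <= reps}.
  by move=> _ /mapP[u u_rep ->]; case: (vmapP Gdl u_rep).
have vmap_uniq : uniq (map (vmap dl) reps) by rewrite map_inj_in_uniq.
apply: uniq_perm => //.
by have [] := uniq_min_size vmap_uniq vmap_reps; rewrite ?size_map.
Qed.

Variable phi : 'M[algC]_2 -> {mpoly R[4]}.
Local Notation Tphi := (Tp iota Gamma p reps phi).

Lemma Tp_vmap dl : Gamma dl ->
  Tphi dl = \sum_(u <- reps) act iota (alpha p u) (phi (alpha_conj p u (vmap dl u) dl)).
Proof.
move=> Gdl; apply: eq_big_seq => u u_rep; have [v_rep Gv] := vmapP Gdl u_rep.
have reps_uniq : uniq reps by case: reps_residues.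
rewrite (bigD1_seq (vmap dl u)) //= big1_seq ?addr0; first by case: excluded_middle_informative.
move=> v' /andP[v'_neq v'_rep]; case: excluded_middle_informative => // Gv'.
by case/eqP: v'_neq; apply: conj_uniq Gv' Gv.
Qed.

Hypothesis phi_cocycle :
  forall g h, Gamma g -> Gamma h -> phi (g *m h) = phi g + act iota g (phi h).

Lemma Tp_cocycle d1 d2 :
  Gamma d1 -> Gamma d2 -> Tphi (d1 *m d2) = Tphi d1 + act iota d1 (Tphi d2).
Proof.
move=> G1 G2; rewrite !Tp_vmap //; last exact: Gamma_mul.
pose F v := act iota (alpha p v) (phi (alpha_conj p v (vmap d2 v) d2)).
transitivity (\sum_(u <- reps) (act iota (alpha p u) (phi (alpha_conj p u (vmap d1 u) d1))
                                + act iota d1 (F (vmap d1 u)))).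
  apply: eq_big_seq => u u_rep; have [v_rep Gv] := vmapP G1 u_rep.
  have [w_rep Gw] := vmapP G2 v_rep.
  rewrite vmap_mul // -(alpha_conj_mul p_neq0 _ (vmap d1 u)) phi_cocycle // actD.
  rewrite (act_comp _ d_gt0 iota_completion (alpha_inO p (reps_O u_rep)) (inGamma_inO Gv)).
  rewrite alpha_mul_conj // -(act_comp _ d_gt0 iota_completion (inGamma_inO G1)) //.
  exact: alpha_inO (reps_O v_rep).
rewrite big_split /= -act_sum -(big_map (vmap d1) predT F).
by rewrite (perm_big _ (perm_vmap G1)).
Qed.

End HeckeOperator.

Theorem lemma4p1 (d p : nat) (R : comNzRingType) (iota : algC -> R)
    (N : algC -> Prop) (reps : seq algC) (n g : nat) :
  (0 < d)%N -> class_number_one d ->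
  prime p -> odd p -> inert d p ->
  is_completion d p iota ->
  idealO d N -> (exists x, N x /\ x <> 0) ->
  is_reps d p reps ->
  (1 <= n)%N -> (n <= g)%N ->
  forall phi : 'M[algC]_2 -> {mpoly R[4]},
    cocycle (inGamma d N p) (inW p n g) (act iota) phi ->
    exists psi : 'M[algC]_2 -> {mpoly R[4]},
      cocycle (inGamma d N p) (inSgg g) (act iota) psi /\
      exists r : R, r != 0 /\
      exists m : {mpoly R[4]}, inSgg g m /\
        forall gm, inGamma d N p gm ->
          r *: (Tp iota (inGamma d N p) p reps phi gm - (p%:R : R) ^+ n *: psi gm)
          = act iota gm m - m.
Proof.
move=> d_gt0 _ p_prime _ p_inert iota_completion N_ideal _ reps_residues _ _.
move=> phi [phi_W phi_cocycle].
set T := Tp iota _ p reps phi.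
have [psi psiP] := choice _ (fun dl =>
  Tp_inSgg_scaled reps dl (iota_nat iota_completion p) (iota0 iota_completion) phi_W).
have pn_lreg : GRing.lreg (p%:R ^+ n : R).
  exact/lregX/(pnat_lreg iota_completion (prime_gt0 p_prime)).
exists psi; split.
  split=> [dl _ | g1 g2 G1 G2]; first exact: (psiP dl).1.
  apply/eqP; rewrite -subr_eq0 -(lreg_mpolyZ_eq0 _ pn_lreg) scalerBr scalerDr -actZ.
  rewrite -!(psiP _).2 /T.
  by rewrite (Tp_cocycle d_gt0 iota_completion N_ideal p_prime p_inert reps_residues) ?subrr.
exists 1; split; first exact: oner_neq0.
exists 0; split; first exact: inSgg0.
by move=> gm _; rewrite -(psiP gm).2 subrr scaler0 act0 subrr.
Qed.
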